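(* Let $\zeta:(0,\pi]\to\mathbb R^p$ be continuously differentiable with $\|\zeta(\lambda)\|\le K|\log\lambda|^\ell$ for some $\ell\ge1$ and $\|\partial\zeta(\lambda)/\partial\lambda\|\le K\lambda^{-1}|\log\lambda|^{\ell-1}$ for all $\lambda\in(0,\pi]$, where $K<\infty$. Then, as $T\to\infty$, $$\sup_{\lambda\in[0,\pi]}\Big\|\frac1{\tilde T}\sum_{j=1}^{[\tilde T\lambda/\pi]}\zeta(\lambda_j)-\frac1\pi\int_0^\lambda\zeta(x)\,dx\Big\|\le K'\frac{(\log\tilde T)^\ell}{\tilde T}$$ for some constant $K'<\infty$.
   Context: $T$ is a positive integer (sample size), $\tilde T=[T/2]$ (integer part), and $\lambda_j=2\pi j/T$ are the Fourier frequencies. *)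

From Stdlib Require Import Reals Lra List.
From Coquelicot Require Import Coquelicot.
Open Scope R_scope.

Definition vnorm (p : nat) (v : nat -> R) : R :=
  sqrt (fold_right Rplus 0 (map (fun k => v k ^ 2) (seq 0 p))).

(* Real power x^y for x >= 0, with the conventions 0^0 = 1, 0^y = 0 (y > 0). *)
Definition pw (x y : R) : R :=
  if Req_EM_T x 0 then (if Req_EM_T y 0 then 1 else 0) else Rpower x y.

Definition Ttil (T : nat) : nat := Nat.div T 2.

Definition lamj (T j : nat) : R := 2 * PI * INR j / INR T.

Definition nsum (T : nat) (lam : R) : nat :=
  Z.to_nat (Int_part (INR (Ttil T) * lam / PI)).

Definition impint (f : R -> R) (lam : R) : R :=
  if Req_EM_T lam 0 then 0 else RInt_gen f (at_right 0) (at_point lam).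

(* With step h = 2 pi / T, the normalised sum is a right-endpoint Riemann sum of the integral
   divided by pi, up to a relative error O(1 / Ttil) coming from 2 Ttil <= T <= 2 Ttil + 1.
   On [h, pi] one has |ln x| <= 2 ln Ttil, so |zeta| <= K (2 ln Ttil)^l there, and by the mean
   value theorem the cell [(j-1) h, j h] costs at most h K (2 ln Ttil)^(l-1) / (j-1); these
   harmonic terms add up to O(h (ln Ttil)^l).  Near 0 the integrand is dominated by the derivative
   of G(x) = 2 K x (-ln x)^l, which tends to 0 at 0: comparison with G makes the improper integral
   converge and bounds it on the first cells by G(2h) = O(h (ln Ttil)^l).  The vector bound then
   holds coordinatewise. *)

From Stdlib Require Import Reals Lra Lia List ZArith.
From Coquelicot Require Import Coquelicot.
Open Scope R_scope.

Lemma exp_le_compat x y : x <= y -> exp x <= exp y.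
Proof. intros [hlt | ->]; [left; apply exp_increasing, hlt | right; reflexivity]. Qed.

Lemma ln_lt_0 x : 0 < x < 1 -> ln x < 0.
Proof. intros hx. rewrite <- ln_1. apply ln_increasing; lra. Qed.

Lemma ln_le_sub_1 x : 0 < x -> ln x <= x - 1.
Proof. intros hx. pose proof (exp_ineq1_le (ln x)) as h. rewrite exp_ln in h; lra. Qed.

Lemma two_le_ln_9 : 2 <= ln 9.
Proof.
  rewrite <- (ln_exp 2). apply ln_le; [apply exp_pos|].
  replace 2 with (1 + 1) by ring. rewrite exp_plus.
  pose proof exp_le_3. pose proof (exp_pos 1). nra.
Qed.

Lemma inv_le_2_ln_succ_diff x : 1 <= x -> / x <= 2 * (ln (x + 1) - ln x).
Proof.
  intros hx. set (y := / x).
  assert (hy : 0 < y <= 1).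
  { unfold y. split; [apply Rinv_0_lt_compat; lra|].
    rewrite <- Rinv_1. apply Rinv_le_contravar; lra. }
  (* [exp (y/2) <= 1 + y] since [exp (-y/2) >= 1 - y/2] and [(1 + y)(1 - y/2) >= 1] on [0, 1] *)
  assert (hexp : exp (y / 2) <= 1 + y).
  { pose proof (exp_ineq1_le (- (y / 2))).
    assert (exp (y / 2) * exp (- (y / 2)) = 1) by (rewrite <- exp_plus, Rplus_opp_r; apply exp_0).
    pose proof (exp_pos (y / 2)). nra. }
  assert (y / 2 <= ln (1 + y)) by (rewrite <- (ln_exp (y / 2)); apply ln_le; [apply exp_pos | exact hexp]).
  assert (ln (x + 1) - ln x = ln (1 + y)) by (rewrite <- ln_div by lra; f_equal; unfold y; field; lra).
  lra.
Qed.

Lemma Rpower_gt_0 x y : 0 < Rpower x y.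
Proof. apply exp_pos. Qed.

Lemma pw_eq_Rpower x y : 0 < x -> pw x y = Rpower x y.
Proof. intros hx. unfold pw. destruct (Req_EM_T x 0); [lra | reflexivity]. Qed.

Lemma pw_le_Rpower x y M : 0 <= x <= M -> 0 < M -> 0 <= y -> pw x y <= Rpower M y.
Proof.
  intros hx hM hy. unfold pw. destruct (Req_EM_T x 0).
  - destruct (Req_EM_T y 0); [subst; rewrite Rpower_O; lra | left; apply Rpower_gt_0].
  - apply Rle_Rpower_l; lra.
Qed.

Lemma Rabs_ln_le_2_ln h N x :
  0 < h -> / h <= N -> 2 <= ln N -> h <= x <= PI -> Rabs (ln x) <= 2 * ln N.
Proof.
  intros hh hN hlnN hx. pose proof PI_4.
  assert (ln h <= ln x) by (apply ln_le; lra).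
  assert (ln (/ h) <= ln N) by (apply ln_le; [apply Rinv_0_lt_compat|]; lra).
  rewrite ln_Rinv in * by lra.
  pose proof (ln_le_sub_1 x ltac:(lra)).
  apply Rabs_le. lra.
Qed.

Lemma fold_Rplus_nonneg (s : list R) : List.Forall (Rle 0) s -> 0 <= fold_right Rplus 0 s.
Proof. induction 1; simpl; lra. Qed.

Lemma fold_Rplus_ge_In (s : list R) x : List.Forall (Rle 0) s -> In x s -> x <= fold_right Rplus 0 s.
Proof.
  induction 1 as [|y s hy hs IH]; intros hx; [destruct hx|]. simpl.
  destruct hx as [<- | hx].
  - pose proof (fold_Rplus_nonneg s hs). lra.
  - pose proof (IH hx). lra.
Qed.

Lemma fold_Rplus_le (s : list R) B :
  List.Forall (fun x => x <= B) s -> fold_right Rplus 0 s <= INR (length s) * B.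
Proof. induction 1; simpl length; rewrite ?S_INR; simpl; lra. Qed.

Lemma vnorm_ge_coord p v k : (k < p)%nat -> Rabs (v k) <= vnorm p v.
Proof.
  intros hk. unfold vnorm. rewrite <- sqrt_Rsqr_abs. apply sqrt_le_1_alt.
  unfold Rsqr. replace (v k * v k) with (v k ^ 2) by ring.
  apply fold_Rplus_ge_In.
  - apply List.Forall_forall. intros y hy. apply in_map_iff in hy as [j [<- _]]. apply pow2_ge_0.
  - apply in_map_iff. exists k. split; [reflexivity | apply in_seq; lia].
Qed.

Lemma vnorm_le p v B : 0 <= B -> (forall k, (k < p)%nat -> Rabs (v k) <= B) -> vnorm p v <= INR p * B.
Proof.
  intros hB hv. pose proof (pos_INR p).
  assert (hsum : fold_right Rplus 0 (map (fun k => v k ^ 2) (seq 0 p)) <= INR p * B ^ 2).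
  { replace (INR p) with (INR (length (map (fun k => v k ^ 2) (seq 0 p))))
      by now rewrite length_map, length_seq.
    apply fold_Rplus_le, List.Forall_forall. intros y hy.
    apply in_map_iff in hy as [k [<- hk]]. apply in_seq in hk.
    rewrite <- (pow2_abs (v k)). pose proof (hv k ltac:(lia)). pose proof (Rabs_pos (v k)). nra. }
  unfold vnorm. rewrite <- (sqrt_square (INR p * B)) by nra. apply sqrt_le_1_alt.
  (* [p B^2 <= (p B)^2] because [p] is a natural number *)
  destruct p as [|p]; [simpl in *; nra|]. rewrite S_INR in *. pose proof (pos_INR p). nra.
Qed.

Lemma nonneg_of_vnorm_le_mul_pw p v K y l : 0 < y -> vnorm p v <= K * pw y l -> 0 <= K.
Proof.
  intros hy hv. rewrite pw_eq_Rpower in hv by assumption.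
  pose proof (sqrt_pos (fold_right Rplus 0 (map (fun k => v k ^ 2) (seq 0 p)))).
  pose proof (Rpower_gt_0 y l). unfold vnorm in hv. nra.
Qed.

Lemma sum_n_m_1_abs_le (a : nat -> R) n B :
  (forall j, (1 <= j <= n)%nat -> Rabs (a j) <= B) -> Rabs (sum_n_m a 1 n) <= INR n * B.
Proof.
  induction n as [|n IH]; intros ha.
  - rewrite sum_n_m_zero by lia. change (Rabs 0 <= 0 * B). rewrite Rabs_R0. lra.
  - rewrite sum_n_Sm, S_INR by lia. eapply Rle_trans; [apply Rabs_triang|].
    pose proof (IH (fun j hj => ha j ltac:(lia))). pose proof (ha (S n) ltac:(lia)).
    change (plus (sum_n_m a 1 n) (a (S n))) with (sum_n_m a 1 n + a (S n)) in *. lra.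
Qed.

Lemma at_right_0_intro (P : R -> Prop) r : 0 < r -> (forall x, 0 < x < r -> P x) -> at_right 0 P.
Proof.
  intros hr hP. exists (mkposreal r hr). intros x hx hx0. apply hP.
  change (Rabs (x - 0) < r) in hx. apply Rabs_lt_between in hx. lra.
Qed.

Lemma at_right_0_elim (P : R -> Prop) : at_right 0 P -> exists r, 0 < r /\ forall x, 0 < x < r -> P x.
Proof.
  intros [r hr]. exists r. split; [apply cond_pos|]. intros x hx. apply hr; [|lra].
  change (Rabs (x - 0) < r). rewrite Rabs_right; lra.
Qed.

Lemma Rmin_eq_locally (f : R -> R) b x : x < b -> locally x (fun t => f t = f (Rmin t b)).
Proof.
  intros hx. exists (mkposreal (b - x) ltac:(lra)). intros t ht.
  change (Rabs (t - x) < b - x) in ht. apply Rabs_lt_between in ht.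
  rewrite Rmin_left by lra. reflexivity.
Qed.

Lemma continuous_Rmin_of_left_limit (f : R -> R) b :
  filterlim f (at_left b) (locally (f b)) -> continuous (fun x => f (Rmin x b)) b.
Proof.
  intros hf P [eps hP]. destruct (hf _ (locally_ball (f b) eps)) as [r hr].
  exists r. intros y hy. apply hP. rewrite (Rmin_left b b) by lra.
  destruct (Rlt_dec y b) as [hyb | hyb].
  - rewrite Rmin_left by lra. apply hr; assumption.
  - rewrite Rmin_right by lra. apply ball_center.
Qed.

Lemma ex_RInt_of_continuous (f : R -> R) a b :
  a <= b -> (forall x, a <= x <= b -> continuous f x) -> ex_RInt f a b.
Proof.
  intros hab hf. apply (ex_RInt_continuous (V := R_CompleteNormedModule)). intros x hx.
  rewrite Rmin_left, Rmax_right in hx by lra. auto.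
Qed.

Lemma RInt_right_endpoint_error (f df : R -> R) a b B :
  a <= b -> 0 <= B ->
  (forall x, a <= x <= b -> continuous f x) ->
  (forall x, a < x < b -> is_derive f x (df x)) ->
  (forall x, a < x < b -> Rabs (df x) <= B) ->
  Rabs ((b - a) * f b - RInt f a b) <= (b - a) ^ 2 * B.
Proof.
  intros hab hB hf hdf hdfB.
  (* [df] is unconstrained at [a] and [b], where the mean value theorem may land *)
  set (D := fun x => if Rlt_dec a x then if Rlt_dec x b then df x else 0 else 0).
  assert (hDB : forall x, Rabs (D x) <= B).
  { intros x. unfold D.
    destruct (Rlt_dec a x), (Rlt_dec x b); rewrite ?Rabs_R0; auto. }
  assert (hlip : forall t, a <= t <= b -> Rabs (f b - f t) <= (b - a) * B).
  { intros t ht.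
    destruct (MVT_gen f t b D) as [c [_ hc]].
    - intros x hx. rewrite Rmin_left, Rmax_right in hx by lra.
      unfold D. destruct (Rlt_dec a x); [|lra]. destruct (Rlt_dec x b); [|lra]. apply hdf. lra.
    - intros x hx. rewrite Rmin_left, Rmax_right in hx by lra.
      apply continuity_pt_filterlim, hf. lra.
    - rewrite hc, Rabs_mult, (Rabs_right (b - t)) by lra.
      pose proof (hDB c). pose proof (Rabs_pos (D c)). nra. }
  assert (hfint : ex_RInt f a b) by (apply ex_RInt_of_continuous; auto).
  replace ((b - a) * f b - RInt f a b) with (RInt (fun t => f b - f t) a b).
  - replace ((b - a) ^ 2 * B) with ((b - a) * ((b - a) * B)) by ring.
    apply abs_RInt_le_const; auto.
    apply (ex_RInt_minus (V := R_NormedModule)); auto. apply ex_RInt_const.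
  - rewrite (RInt_minus (V := R_CompleteNormedModule) (fun _ => f b) f) by auto using ex_RInt_const.
    rewrite RInt_const. reflexivity.
Qed.

Lemma is_RInt_gen_at_right_0_abs_le (f : R -> R) x L B :
  0 < x -> is_RInt_gen f (at_right 0) (at_point x) L ->
  (forall a, 0 < a < x -> ex_RInt f a x /\ Rabs (RInt f a x) <= B) -> Rabs L <= B.
Proof.
  intros hx hL hB. destruct (Rle_or_lt (Rabs L) B) as [|hlt]; [assumption|]. exfalso.
  assert (heps : 0 < Rabs L - B) by lra.
  destruct (hL _ (locally_ball L (mkposreal _ heps))) as [P Q hP hQ hPQ].
  destruct (at_right_0_elim P hP) as [r [hr hPr]].
  set (a := Rmin r x / 2).
  assert (ha : 0 < a < x /\ a < r).
  { pose proof (Rmin_l r x). pose proof (Rmin_r r x). pose proof (Rmin_glb_lt r x 0 hr hx).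
    unfold a. lra. }
  destruct (hPQ a x (hPr a ltac:(lra)) hQ) as [y [hy hyL]].
  destruct (hB a ltac:(lra)) as [_ hbound].
  simpl in hy. rewrite (is_RInt_unique _ _ _ _ hy) in hbound.
  change (Rabs (y - L) < Rabs L - B) in hyL.
  pose proof (Rabs_triang_inv L y). rewrite Rabs_minus_sym in hyL. lra.
Qed.

Lemma impint_eq (f : R -> R) x L : 0 < x -> is_RInt_gen f (at_right 0) (at_point x) L -> impint f x = L.
Proof.
  intros hx hL. unfold impint. destruct (Req_EM_T x 0); [lra|].
  apply (is_RInt_gen_unique (V := R_CompleteNormedModule)). exact hL.
Qed.

Lemma impint_ext (f g : R -> R) x :
  0 < x -> (forall t, 0 < t <= x -> f t = g t) ->
  is_RInt_gen f (at_right 0) (at_point x) (impint f x) -> impint g x = impint f x.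
Proof.
  intros hx hfg hf. apply impint_eq; [assumption|].
  apply (is_RInt_gen_ext f); [|exact hf].
  apply Filter_prod with (fun a => 0 < a < x) (fun b => b = x).
  - apply at_right_0_intro with x; auto.
  - reflexivity.
  - intros a b ha hb t ht. simpl in ht. subst b.
    rewrite Rmin_left, Rmax_right in ht by lra. apply hfg. lra.
Qed.

Lemma is_RInt_gen_at_right_0_Chasles (f : R -> R) a b L :
  is_RInt_gen f (at_right 0) (at_point a) L -> ex_RInt f a b ->
  is_RInt_gen f (at_right 0) (at_point b) (L + RInt f a b).
Proof.
  intros hL hab. apply (is_RInt_gen_Chasles (V := R_NormedModule) f a); [exact hL|].
  apply is_RInt_gen_at_point, (RInt_correct f), hab.
Qed.

Section ImproperComparison.

Variables (F g G : R -> R) (d : R).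
Hypothesis d_pos : 0 < d.
Hypothesis F_cont : forall x, 0 < x <= d -> continuous F x.
Hypothesis G_deriv : forall x, 0 < x <= d -> is_derive G x (g x).
Hypothesis g_cont : forall x, 0 < x <= d -> continuous g x.
Hypothesis F_le_g : forall x, 0 < x <= d -> Rabs (F x) <= g x.
Hypothesis G_ge_0 : forall x, 0 < x <= d -> 0 <= G x.
Hypothesis G_lim_0 : filterlim G (at_right 0) (locally 0).

Lemma RInt_abs_le_majorant_incr a b : 0 < a <= b -> b <= d -> Rabs (RInt F a b) <= G b - G a.
Proof.
  intros hab hbd.
  assert (hg : is_RInt g a b (G b - G a)).
  { apply (is_RInt_derive G g); intros x hx; rewrite Rmin_left, Rmax_right in hx by lra.
    - apply G_deriv. lra.
    - apply g_cont. lra. }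
  rewrite <- (is_RInt_unique _ _ _ _ hg).
  eapply Rle_trans; [apply abs_RInt_le; [lra | apply ex_RInt_of_continuous; [lra | intros; apply F_cont; lra]]|].
  apply RInt_le; [lra | | exists (G b - G a); exact hg |].
  - apply ex_RInt_of_continuous; [lra|]. intros x hx.
    apply continuous_Rabs_comp, F_cont. lra.
  - intros x hx. apply F_le_g. lra.
Qed.

Lemma majorant_nondecreasing a b : 0 < a <= b -> b <= d -> G a <= G b.
Proof.
  intros hab hbd. pose proof (RInt_abs_le_majorant_incr a b hab hbd).
  pose proof (Rabs_pos (RInt F a b)). lra.
Qed.

Lemma improper_RInt_ex : exists L, is_RInt_gen F (at_right 0) (at_point d) L.
Proof.
  set (A := fun a => RInt F a d).
  assert (hproper : ProperFilter (filtermap A (at_right 0)))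
    by apply filtermap_proper_filter, at_right_proper_filter.
  assert (hcauchy : cauchy (filtermap A (at_right 0))).
  { intros eps.
    destruct (at_right_0_elim _ (G_lim_0 _ (locally_ball 0 eps))) as [r [hr hGr]].
    set (c := Rmin r d / 2).
    assert (hc : 0 < c < r /\ c < d).
    { pose proof (Rmin_l r d). pose proof (Rmin_r r d). pose proof (Rmin_glb_lt r d 0 hr d_pos).
      unfold c. lra. }
    exists (A c). apply at_right_0_intro with c; [lra|]. intros a ha.
    change (Rabs (A a - A c) < eps). unfold A.
    assert (hChasles : RInt F a c + RInt F c d = RInt F a d)
      by (apply (RInt_Chasles (V := R_CompleteNormedModule));
          apply ex_RInt_of_continuous; try lra; intros; apply F_cont; lra).
    replace (RInt F a d - RInt F c d) with (RInt F a c) by lra.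
    pose proof (RInt_abs_le_majorant_incr a c ltac:(lra) ltac:(lra)).
    pose proof (G_ge_0 a ltac:(lra)).
    pose proof (hGr c ltac:(lra)) as hGc. change (Rabs (G c - 0) < eps) in hGc.
    apply Rabs_lt_between in hGc. lra. }
  exists (lim (filtermap A (at_right 0))). intros P [eps hP].
  apply Filter_prod with (fun a => ball (lim (filtermap A (at_right 0))) eps (A a) /\ 0 < a < d)
    (fun b => b = d).
  - apply filter_and; [apply complete_cauchy; assumption|].
    apply at_right_0_intro with d; auto.
  - reflexivity.
  - intros a b [ha1 ha2] hb. rewrite hb. exists (A a). split; [|apply hP, ha1].
    apply (RInt_correct F), ex_RInt_of_continuous; simpl; [lra | intros; apply F_cont; lra].
Qed.

Lemma improper_RInt_abs_le_majorant x L :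
  0 < x <= d -> is_RInt_gen F (at_right 0) (at_point x) L -> Rabs L <= G x.
Proof.
  intros hx hL. apply (is_RInt_gen_at_right_0_abs_le F x L); [lra | exact hL |].
  intros a ha. split.
  - apply ex_RInt_of_continuous; [lra | intros; apply F_cont; lra].
  - pose proof (RInt_abs_le_majorant_incr a x ltac:(lra) ltac:(lra)). pose proof (G_ge_0 a ltac:(lra)). lra.
Qed.

End ImproperComparison.

Definition log_majorant (K l x : R) : R := 2 * K * x * Rpower (- ln x) l.

Definition log_majorant' (K l x : R) : R := 2 * K * Rpower (- ln x) l * (1 - l / - ln x).

Lemma is_derive_log_majorant K l x : 0 < x < 1 -> is_derive (log_majorant K l) x (log_majorant' K l x).
Proof.
  intros hx. pose proof (ln_lt_0 x hx).
  unfold log_majorant, log_majorant', Rpower. auto_derive.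
  - repeat split; lra.
  - field. lra.
Qed.

Lemma continuous_log_majorant' K l x : 0 < x < 1 -> continuous (log_majorant' K l) x.
Proof.
  intros hx. pose proof (ln_lt_0 x hx).
  apply (ex_derive_continuous (K := R_AbsRing) (V := R_NormedModule)).
  unfold log_majorant', Rpower. auto_derive. repeat split; lra.
Qed.

Lemma log_majorant_ge_0 K l x : 0 <= K -> 0 < x -> 0 <= log_majorant K l x.
Proof.
  intros hK hx. unfold log_majorant. pose proof (Rpower_gt_0 (- ln x) l).
  apply Rmult_le_pos; [apply Rmult_le_pos|]; lra.
Qed.

Lemma exp_neg_2l_lt_1 l : 1 <= l -> exp (- (2 * l)) < 1.
Proof. intros hl. rewrite <- exp_0. apply exp_increasing. lra. Qed.

(* Below [exp (-2l)] one has [-ln x >= 2l], so the factor [1 - l / - ln x] is at least [1/2]. *)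
Lemma log_majorant'_ge K l x :
  0 <= K -> 1 <= l -> 0 < x <= exp (- (2 * l)) -> K * Rpower (- ln x) l <= log_majorant' K l x.
Proof.
  intros hK hl hx.
  assert (hlnx : 2 * l <= - ln x).
  { pose proof (ln_le x (exp (- (2 * l))) (proj1 hx) (proj2 hx)) as h. rewrite ln_exp in h. lra. }
  assert (l / - ln x <= 1 / 2).
  { apply Rmult_le_reg_r with (- ln x); [lra|]. field_simplify; lra. }
  assert (0 <= K * Rpower (- ln x) l) by (pose proof (Rpower_gt_0 (- ln x) l); nra).
  unfold log_majorant'. nra.
Qed.

Lemma mul_Rpower_neg_ln_le x l :
  0 < l -> 0 < x < 1 -> x * Rpower (- ln x) l <= exp (l * (ln (2 * l) - 1)) * Rpower x (/ 2).
Proof.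
  intros hl hx. pose proof (ln_lt_0 x hx). set (u := - ln x).
  (* [l ln u <= u/2 + l (ln (2l) - 1)] is [ln y <= y - 1] at [y = u / (2l)] *)
  assert (hlog : l * ln u <= u / 2 + l * (ln (2 * l) - 1)).
  { pose proof (ln_le_sub_1 (u / (2 * l)) ltac:(apply Rdiv_lt_0_compat; unfold u; lra)) as h.
    rewrite ln_div in h by (unfold u; lra).
    assert (l * (ln u - ln (2 * l)) <= l * (u / (2 * l) - 1)) by (apply Rmult_le_compat_l; lra).
    replace (l * (u / (2 * l) - 1)) with (u / 2 - l) in * by (field; lra). lra. }
  unfold Rpower. rewrite <- (exp_ln x) at 1 by lra. rewrite <- !exp_plus.
  apply exp_le_compat. unfold u in *. lra.
Qed.

Lemma log_majorant_lim_0 K l : 0 <= K -> 1 <= l -> filterlim (log_majorant K l) (at_right 0) (locally 0).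
Proof.
  intros hK hl P [eps hP].
  set (C := 2 * K * exp (l * (ln (2 * l) - 1))).
  assert (hC : 0 <= C) by (unfold C; pose proof (exp_pos (l * (ln (2 * l) - 1))); nra).
  set (eta := eps / (C + 1)).
  assert (heta : 0 < eta) by (apply Rdiv_lt_0_compat; [apply cond_pos | lra]).
  apply at_right_0_intro with (Rmin 1 (eta * eta)); [apply Rmin_glb_lt; nra|].
  intros x hx. apply hP. change (Rabs (log_majorant K l x - 0) < eps).
  pose proof (Rmin_l 1 (eta * eta)). pose proof (Rmin_r 1 (eta * eta)).
  assert (hsqrt : sqrt x < eta).
  { rewrite <- (sqrt_square eta) by lra. apply sqrt_lt_1; nra. }
  pose proof (mul_Rpower_neg_ln_le x l ltac:(lra) ltac:(lra)) as hb.
  rewrite Rpower_sqrt in hb by lra.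
  pose proof (log_majorant_ge_0 K l x hK ltac:(lra)).
  assert (log_majorant K l x <= C * eta).
  { replace (log_majorant K l x) with (2 * K * (x * Rpower (- ln x) l)) by (unfold log_majorant; ring).
    unfold C. rewrite !Rmult_assoc. apply Rmult_le_compat_l; [lra|]. apply Rmult_le_compat_l; [lra|].
    pose proof (exp_pos (l * (ln (2 * l) - 1))). nra. }
  assert (C * eta < eps) by (unfold eta; apply Rmult_lt_reg_r with (C + 1); [lra|];
    field_simplify; [pose proof (cond_pos eps); nra | lra]).
  rewrite Rminus_0_r, Rabs_right; lra.
Qed.

Lemma log_majorant_le_scale K l h N x :
  0 <= K -> 1 <= l -> 0 < h -> / h <= N -> 2 <= ln N -> h <= x <= exp (- (2 * l)) ->
  log_majorant K l x <= 2 * K * x * Rpower (2 * ln N) l.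
Proof.
  intros hK hl hh hN hlnN hx. pose proof (exp_neg_2l_lt_1 l hl). pose proof PI_RGT_0. pose proof PI2_1.
  pose proof (ln_lt_0 x ltac:(lra)).
  pose proof (Rabs_ln_le_2_ln h N x hh hN hlnN ltac:(lra)) as hln. rewrite Rabs_left in hln by lra.
  unfold log_majorant. apply Rmult_le_compat_l; [apply Rmult_le_pos; lra|].
  apply Rle_Rpower_l; lra.
Qed.

Lemma Ttil_bounds T : 2 * INR (Ttil T) <= INR T <= 2 * INR (Ttil T) + 1.
Proof.
  unfold Ttil. pose proof (Nat.div_mod T 2 ltac:(lia)) as hT. pose proof (Nat.mod_upper_bound T 2 ltac:(lia)).
  assert (hr : INR (T mod 2) <= 1) by (apply (le_INR _ 1); lia).
  pose proof (pos_INR (T mod 2)).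
  assert (INR T = 2 * INR (T / 2) + INR (T mod 2)) by (rewrite hT at 1; rewrite plus_INR, mult_INR; reflexivity).
  lra.
Qed.

Lemma nsum_bounds T lam : 0 <= lam ->
  INR (nsum T lam) <= INR (Ttil T) * lam / PI < INR (nsum T lam) + 1.
Proof.
  intros hlam. unfold nsum. set (r := INR (Ttil T) * lam / PI).
  assert (hr : 0 <= r).
  { unfold r. pose proof (pos_INR (Ttil T)). pose proof PI_RGT_0.
    apply Rmult_le_pos; [apply Rmult_le_pos | left; apply Rinv_0_lt_compat]; lra. }
  destruct (base_Int_part r) as [h1 h2].
  assert (hz : (0 <= Int_part r)%Z) by (assert (-1 < Int_part r)%Z by (apply lt_IZR; simpl; lra); lia).
  rewrite INR_IZR_INZ, Z2Nat.id by exact hz. lra.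
Qed.

Lemma nsum_le_Ttil T lam : 0 <= lam <= PI -> INR (nsum T lam) <= INR (Ttil T).
Proof.
  intros hlam. pose proof (nsum_bounds T lam (proj1 hlam)). pose proof (pos_INR (Ttil T)). pose proof PI_RGT_0.
  assert (INR (Ttil T) * lam / PI <= INR (Ttil T)).
  { unfold Rdiv. rewrite Rmult_assoc. rewrite <- (Rmult_1_r (INR (Ttil T))) at 2.
    apply Rmult_le_compat_l; [lra|]. rewrite <- (Rinv_r PI) by lra.
    apply Rmult_le_compat_r; [left; apply Rinv_0_lt_compat|]; lra. }
  lra.
Qed.

Lemma nsum_step_bounds T lam : 0 < INR (Ttil T) -> 0 <= lam <= PI ->
  INR (nsum T lam) * (2 * PI / INR T) <= lam <= INR (nsum T lam) * (2 * PI / INR T) + 2 * (2 * PI / INR T).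
Proof.
  intros hN hlam. pose proof (Ttil_bounds T). pose proof (nsum_bounds T lam (proj1 hlam)). pose proof PI_RGT_0.
  set (N := INR (Ttil T)) in *. set (n := INR (nsum T lam)) in *.
  assert (hnlam : n * PI <= N * lam /\ N * lam < (n + 1) * PI).
  { split; [apply Rmult_le_reg_r with (/ PI) | apply Rmult_lt_reg_r with (/ PI)];
      try (apply Rinv_0_lt_compat; lra); field_simplify; lra. }
  replace (n * (2 * PI / INR T) + 2 * (2 * PI / INR T)) with ((n + 2) * (2 * PI) / INR T) by (field; lra).
  replace (n * (2 * PI / INR T)) with (n * (2 * PI) / INR T) by (field; lra).
  split; [apply Rle_div_l | apply Rle_div_r]; nra.
Qed.

Lemma normalization_error_le N T S I Q :
  1 <= N -> 2 * N <= T <= 2 * N + 1 -> 0 <= Q ->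
  Rabs (2 * PI / T * S) <= PI * Q -> Rabs (2 * PI / T * S - I) <= 6 * (2 * PI / T) * Q ->
  Rabs (/ N * S - / PI * I) <= 7 * Q / N.
Proof.
  intros hN hT hQ hS herr. pose proof PI_RGT_0. set (h := 2 * PI / T) in *.
  (* [1 / N = (1 + c) h / pi] with [0 <= c <= 1 / (2N)] since [2N <= T <= 2N + 1] *)
  set (c := T / (2 * N) - 1).
  assert (hc : 0 <= c <= / (2 * N)).
  { replace c with ((T - 2 * N) * / (2 * N)) by (unfold c; field; lra).
    assert (0 < / (2 * N)) by (apply Rinv_0_lt_compat; lra). split; nra. }
  replace (/ N * S - / PI * I) with (/ PI * (c * (h * S) + (h * S - I))) by (unfold c, h; field; lra).
  rewrite Rabs_mult, Rabs_right by (left; apply Rinv_0_lt_compat; lra).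
  apply Rle_trans with (/ PI * (c * (PI * Q) + 6 * h * Q)).
  - apply Rmult_le_compat_l; [left; apply Rinv_0_lt_compat; lra|].
    eapply Rle_trans; [apply Rabs_triang|]. rewrite Rabs_mult, (Rabs_right c) by lra.
    pose proof (Rabs_pos (h * S)). nra.
  - apply (Rle_div_r _ (7 * Q) N); [lra|].
    replace (/ PI * (c * (PI * Q) + 6 * h * Q) * N) with (c * N * Q + 6 * (2 * N / T) * Q) by (unfold h; field; lra).
    assert (c * N <= / 2) by (replace (/ 2) with (/ (2 * N) * N) by (field; lra); nra).
    assert (2 * N / T <= 1) by (apply (Rle_div_l (2 * N) 1 T); lra).
    nra.
Qed.

Section LogSingularIntegrand.

Variables (K l : R) (F dF : R -> R).
Hypothesis K_ge_0 : 0 <= K.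
Hypothesis l_ge_1 : 1 <= l.
Hypothesis F_cont : forall x, 0 < x <= PI -> continuous F x.
Hypothesis F_deriv : forall x, 0 < x < PI -> is_derive F x (dF x).
Hypothesis F_bound : forall x, 0 < x <= PI -> Rabs (F x) <= K * pw (Rabs (ln x)) l.
Hypothesis dF_bound : forall x, 0 < x < PI -> Rabs (dF x) <= K / x * pw (Rabs (ln x)) (l - 1).

Let exp_neg_2l_lt_PI : exp (- (2 * l)) < PI.
Proof. pose proof (exp_neg_2l_lt_1 l l_ge_1). pose proof PI_RGT_0. pose proof PI2_1. lra. Qed.

Let F_cont_near_0 x : 0 < x <= exp (- (2 * l)) -> continuous F x.
Proof. intros hx. apply F_cont. lra. Qed.

Let log_majorant_deriv x : 0 < x <= exp (- (2 * l)) -> is_derive (log_majorant K l) x (log_majorant' K l x).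
Proof. intros hx. pose proof (exp_neg_2l_lt_1 l l_ge_1). apply is_derive_log_majorant. lra. Qed.

Let log_majorant'_cont x : 0 < x <= exp (- (2 * l)) -> continuous (log_majorant' K l) x.
Proof. intros hx. pose proof (exp_neg_2l_lt_1 l l_ge_1). apply continuous_log_majorant'. lra. Qed.

Let F_le_log_majorant' x : 0 < x <= exp (- (2 * l)) -> Rabs (F x) <= log_majorant' K l x.
Proof.
  intros hx. pose proof (exp_neg_2l_lt_1 l l_ge_1). pose proof (ln_lt_0 x ltac:(lra)).
  eapply Rle_trans; [apply F_bound; lra|].
  rewrite Rabs_left, pw_eq_Rpower by lra. apply log_majorant'_ge; assumption.
Qed.

Let log_majorant_nonneg x : 0 < x <= exp (- (2 * l)) -> 0 <= log_majorant K l x.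
Proof. intros hx. apply log_majorant_ge_0; [assumption | lra]. Qed.

Let log_majorant_vanishes_at_0 : filterlim (log_majorant K l) (at_right 0) (locally 0).
Proof. apply log_majorant_lim_0; assumption. Qed.

Lemma ex_RInt_in_0_PI a b : 0 < a <= PI -> 0 < b <= PI -> ex_RInt F a b.
Proof.
  intros ha hb. apply (ex_RInt_continuous (V := R_CompleteNormedModule)). intros x hx. apply F_cont.
  pose proof (Rmin_glb_lt a b 0 (proj1 ha) (proj1 hb)). pose proof (Rmax_lub a b PI (proj2 ha) (proj2 hb)).
  lra.
Qed.

Lemma impint_spec x : 0 < x <= PI -> is_RInt_gen F (at_right 0) (at_point x) (impint F x).
Proof.
  intros hx.
  destruct (improper_RInt_ex F (log_majorant' K l) (log_majorant K l) (exp (- (2 * l))))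
    as [L hL]; auto using exp_pos.
  assert (hd : 0 < exp (- (2 * l)) <= PI) by (pose proof (exp_pos (- (2 * l))); lra).
  pose proof (is_RInt_gen_at_right_0_Chasles F _ x L hL (ex_RInt_in_0_PI _ x hd hx)) as h.
  rewrite (impint_eq F x _ (proj1 hx) h). exact h.
Qed.

Lemma impint_Chasles a b : 0 < a <= PI -> 0 < b <= PI -> impint F b = impint F a + RInt F a b.
Proof.
  intros ha hb. apply impint_eq; [lra|].
  apply is_RInt_gen_at_right_0_Chasles; [apply impint_spec | apply ex_RInt_in_0_PI]; assumption.
Qed.

Lemma impint_abs_le_log_majorant x : 0 < x <= exp (- (2 * l)) -> Rabs (impint F x) <= log_majorant K l x.
Proof.
  intros hx. apply (improper_RInt_abs_le_majorant F (log_majorant' K l) _ (exp (- (2 * l)))); auto using exp_pos.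
  apply impint_spec. lra.
Qed.

Lemma log_majorant_nondecreasing a b : 0 < a <= b -> b <= exp (- (2 * l)) -> log_majorant K l a <= log_majorant K l b.
Proof. intros hab hb. apply (majorant_nondecreasing F (log_majorant' K l) _ (exp (- (2 * l)))); auto. Qed.

Section Scale.

Variables (h N : R).
Hypothesis h_pos : 0 < h.
Hypothesis inv_h_le_N : / h <= N.
Hypothesis ln_N_ge_2 : 2 <= ln N.
Hypothesis two_h_le : 2 * h <= exp (- (2 * l)).

Local Notation Q := (K * Rpower (2 * ln N) l).

Lemma scale_bound_ge_0 : 0 <= Q.
Proof. pose proof (Rpower_gt_0 (2 * ln N) l). nra. Qed.

Lemma F_abs_le_scale x : h <= x <= PI -> Rabs (F x) <= Q.
Proof.
  intros hx. eapply Rle_trans; [apply F_bound; lra|]. apply Rmult_le_compat_l; [assumption|].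
  apply pw_le_Rpower; [split; [apply Rabs_pos | apply (Rabs_ln_le_2_ln h N)] | |]; auto; lra.
Qed.

Lemma dF_abs_le_scale x : h <= x < PI -> Rabs (dF x) <= K / x * Rpower (2 * ln N) (l - 1).
Proof.
  intros hx. eapply Rle_trans; [apply dF_bound; lra|].
  apply Rmult_le_compat_l; [apply Rmult_le_pos; [|left; apply Rinv_0_lt_compat]; lra|].
  apply pw_le_Rpower; [split; [apply Rabs_pos | apply (Rabs_ln_le_2_ln h N)] | |]; auto; lra.
Qed.

Lemma riemann_cell_error a : h <= a -> a + h <= PI ->
  Rabs (h * F (a + h) - RInt F a (a + h)) <= h * K * Rpower (2 * ln N) (l - 1) / a * h.
Proof.
  intros ha hb. pose proof (Rpower_gt_0 (2 * ln N) (l - 1)).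
  assert (hB : 0 <= K / a * Rpower (2 * ln N) (l - 1))
    by (apply Rmult_le_pos; [apply Rmult_le_pos; [|left; apply Rinv_0_lt_compat]|]; lra).
  assert (hE : Rabs ((a + h - a) * F (a + h) - RInt F a (a + h))
               <= (a + h - a) ^ 2 * (K / a * Rpower (2 * ln N) (l - 1))).
  { apply (RInt_right_endpoint_error F dF); [lra | assumption | | |].
    - intros x hx. apply F_cont. lra.
    - intros x hx. apply F_deriv. lra.
    - intros x hx. eapply Rle_trans; [apply dF_abs_le_scale; lra|].
      apply Rmult_le_compat_r; [lra|]. apply Rmult_le_compat_l; [assumption|].
      apply Rinv_le_contravar; lra. }
  replace (a + h - a) with h in hE by ring.
  replace (h * K * Rpower (2 * ln N) (l - 1) / a * h)
    with (h ^ 2 * (K / a * Rpower (2 * ln N) (l - 1))) by (field; lra).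
  exact hE.
Qed.

Lemma riemann_sum_abs_le n : INR n * h <= PI -> Rabs (sum_n_m (fun j => F (INR j * h)) 1 n) <= INR n * Q.
Proof.
  intros hn. apply sum_n_m_1_abs_le. intros j hj.
  pose proof (le_INR 1 j ltac:(lia)). pose proof (le_INR j n ltac:(lia)).
  apply F_abs_le_scale. simpl in *. nra.
Qed.

Lemma riemann_sum_impint_telescope m : INR (S m) * h <= PI ->
  Rabs (h * sum_n_m (fun j => F (INR j * h)) 1 (S m) - impint F (INR (S m) * h))
  <= h * Q + log_majorant K l h + 2 * h * K * Rpower (2 * ln N) (l - 1) * ln (INR (S m)).
Proof.
  pose proof (Rpower_gt_0 (2 * ln N) (l - 1)).
  induction m as [|m IH]; intros hm.
  - rewrite sum_n_n. simpl INR in *. rewrite ln_1, Rmult_1_l in *.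
    pose proof (F_abs_le_scale h ltac:(lra)).
    pose proof (impint_abs_le_log_majorant h ltac:(lra)).
    eapply Rle_trans; [apply Rabs_triang|]. rewrite Rabs_Ropp, Rabs_mult, (Rabs_right h) by lra.
    assert (h * Rabs (F h) <= h * Q) by (apply Rmult_le_compat_l; lra). lra.
  - set (a := INR (S m) * h) in *.
    assert (hm1 : 1 <= INR (S m)) by (apply (le_INR 1); lia).
    assert (hnext : INR (S (S m)) * h = a + h) by (unfold a; rewrite (S_INR (S m)); ring).
    rewrite hnext in *.
    assert (hsum : sum_n_m (fun j => F (INR j * h)) 1 (S (S m))
                   = sum_n_m (fun j => F (INR j * h)) 1 (S m) + F (a + h))
      by (rewrite sum_n_Sm, hnext by lia; reflexivity).
    rewrite hsum, (impint_Chasles a (a + h)) by (unfold a in *; nra).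
    replace (h * (sum_n_m (fun j => F (INR j * h)) 1 (S m) + F (a + h)) - (impint F a + RInt F a (a + h)))
      with ((h * sum_n_m (fun j => F (INR j * h)) 1 (S m) - impint F a) + (h * F (a + h) - RInt F a (a + h)))
      by ring.
    eapply Rle_trans; [apply Rabs_triang|].
    pose proof (IH ltac:(unfold a in *; lra)).
    pose proof (riemann_cell_error a ltac:(unfold a; nra) hm).
    (* the cell error [h K M^(l-1) / m] telescopes through [1/m <= 2 (ln (m + 1) - ln m)] *)
    pose proof (inv_le_2_ln_succ_diff (INR (S m)) hm1).
    assert (h * K * Rpower (2 * ln N) (l - 1) / a * h
            <= 2 * h * K * Rpower (2 * ln N) (l - 1) * (ln (INR (S (S m))) - ln (INR (S m)))).
    { rewrite S_INR at 1. replace (h * K * Rpower (2 * ln N) (l - 1) / a * h)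
        with (h * K * Rpower (2 * ln N) (l - 1) * / INR (S m)) by (unfold a; field; lra).
      assert (0 <= h * K * Rpower (2 * ln N) (l - 1)) by (apply Rmult_le_pos; [apply Rmult_le_pos|]; lra).
      nra. }
    lra.
Qed.

Lemma riemann_sum_impint_error n lam :
  INR n <= N -> INR n * h <= lam <= INR n * h + 2 * h -> lam <= PI ->
  Rabs (h * sum_n_m (fun j => F (INR j * h)) 1 n - impint F lam) <= 6 * h * Q.
Proof.
  intros hnN hlam hlamPI. pose proof (pos_INR n).
  assert (0 <= h * Q) by (pose proof scale_bound_ge_0; nra).
  pose proof (log_majorant_le_scale K l h N h K_ge_0 l_ge_1 h_pos inv_h_le_N ln_N_ge_2 ltac:(lra)).
  destruct n as [|m].
  - rewrite sum_n_m_zero by lia. change (zero (G := R_AbelianMonoid)) with 0. simpl INR in *.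
    destruct (Rle_lt_or_eq_dec 0 lam ltac:(lra)) as [hlam0 | <-].
    2: { unfold impint. destruct (Req_EM_T 0 0); [|lra]. rewrite Rmult_0_r, Rminus_0_r, Rabs_R0. nra. }
    pose proof (impint_abs_le_log_majorant lam ltac:(lra)).
    pose proof (log_majorant_nondecreasing lam (2 * h) ltac:(lra) two_h_le).
    pose proof (log_majorant_le_scale K l h N (2 * h) K_ge_0 l_ge_1 h_pos inv_h_le_N ln_N_ge_2 ltac:(lra)).
    rewrite Rmult_0_r, Rminus_0_l, Rabs_Ropp. lra.
  - set (x := INR (S m) * h) in *.
    assert (hx : h <= x) by (unfold x; rewrite S_INR; pose proof (pos_INR m); nra).
    rewrite (impint_Chasles x lam) by lra.
    pose proof (riemann_sum_impint_telescope m) as htel. fold x in htel. specialize (htel ltac:(lra)).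
    assert (hint : Rabs (RInt F x lam) <= 2 * h * Q).
    { eapply Rle_trans; [apply abs_RInt_le_const; [lra | apply ex_RInt_in_0_PI; lra |]|].
      - intros t ht. apply F_abs_le_scale. lra.
      - nra. }
    (* [ln m <= ln N] and [2 ln N * M^(l-1) = M^l] absorb the telescoped harmonic sum into [h Q] *)
    assert (hharm : 2 * h * K * Rpower (2 * ln N) (l - 1) * ln (INR (S m)) <= h * Q).
    { assert (hM : Rpower (2 * ln N) (l - 1) * (2 * ln N) = Rpower (2 * ln N) l).
      { rewrite <- (Rpower_1 (2 * ln N)) at 2 by lra. rewrite <- Rpower_plus. f_equal. ring. }
      assert (ln (INR (S m)) <= ln N) by (apply ln_le; [apply lt_0_INR; lia | assumption]).
      pose proof (Rpower_gt_0 (2 * ln N) (l - 1)).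
      assert (0 <= 2 * h * K * Rpower (2 * ln N) (l - 1)) by (apply Rmult_le_pos; [|lra]; nra).
      rewrite <- hM. nra. }
    replace (h * sum_n_m (fun j => F (INR j * h)) 1 (S m) - (impint F x + RInt F x lam))
      with ((h * sum_n_m (fun j => F (INR j * h)) 1 (S m) - impint F x) - RInt F x lam) by ring.
    eapply Rle_trans; [apply Rabs_triang|]. rewrite Rabs_Ropp. lra.
Qed.

End Scale.

(* [Ttil >= 9] gives [ln Ttil >= 2], and [Ttil >= 2 pi exp (2l)] keeps the first two cells
   inside [(0, exp (-2l)]], where the majorant applies. *)
Lemma fourier_sum_impint_error T lam :
  2 * PI * exp (2 * l) + 9 <= INR (Ttil T) -> 0 <= lam <= PI ->
  Rabs (/ INR (Ttil T) * sum_n_m (fun j => F (lamj T j)) 1 (nsum T lam) - / PI * impint F lam)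
  <= 7 * (K * Rpower (2 * ln (INR (Ttil T))) l) / INR (Ttil T).
Proof.
  intros hN hlam. pose proof PI_RGT_0. pose proof PI2_3_2. pose proof (exp_pos (2 * l)).
  pose proof (Ttil_bounds T) as hT. pose proof (nsum_le_Ttil T lam hlam) as hnN.
  pose proof (nsum_step_bounds T lam ltac:(nra) hlam) as hstep.
  rewrite (sum_n_m_ext _ (fun j => F (INR j * (2 * PI / INR T))))
    by (intros j; unfold lamj, Rdiv; f_equal; ring).
  set (N := INR (Ttil T)) in *. set (n := nsum T lam) in *. set (h := 2 * PI / INR T) in *.
  assert (hN9 : 9 <= N) by nra.
  assert (h_pos : 0 < h) by (unfold h; apply Rdiv_lt_0_compat; lra).
  assert (h_le : h <= PI / N).
  { apply (Rle_div_r h PI N); [lra|]. unfold h.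
    replace (2 * PI / INR T * N) with (PI * (2 * N / INR T)) by (field; lra).
    rewrite <- (Rmult_1_r PI) at 2. apply Rmult_le_compat_l; [lra|]. apply Rle_div_l; lra. }
  assert (inv_h : / h <= N) by (unfold h; rewrite Rinv_div; apply (Rle_div_l (INR T) N (2 * PI)); nra).
  assert (ln_N : 2 <= ln N) by (eapply Rle_trans; [apply two_le_ln_9 | apply ln_le; lra]).
  assert (two_h : 2 * h <= exp (- (2 * l))).
  { rewrite exp_Ropp. apply Rle_trans with (2 * PI / N); [unfold Rdiv in *; lra|].
    apply (Rle_div_l (2 * PI) (/ exp (2 * l)) N); [lra|].
    apply Rmult_le_reg_r with (exp (2 * l)); [lra|]. field_simplify; nra. }
  set (Q := K * Rpower (2 * ln N) l).
  apply (normalization_error_le N (INR T)); [lra | assumption | apply (scale_bound_ge_0 N) | |].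
  - fold h. pose proof (riemann_sum_abs_le h N h_pos inv_h ln_N n ltac:(lra)) as hsum. fold Q in hsum.
    rewrite Rabs_mult, (Rabs_right h) by lra. apply Rle_trans with (INR n * h * Q); [nra|].
    apply Rmult_le_compat_r; [apply (scale_bound_ge_0 N) | lra].
  - fold h. exact (riemann_sum_impint_error h N h_pos inv_h ln_N two_h n lam hnN hstep (proj2 hlam)).
Qed.

End LogSingularIntegrand.

(* Only the values on [(0, pi]] matter, so [f] may be frozen at [f pi] beyond [pi],
   which makes it continuous on all of [(0, pi]]. *)
Lemma fourier_sum_impint_error_left_continuous (f df : R -> R) K l T lam :
  0 <= K -> 1 <= l ->
  (forall x, 0 < x < PI -> is_derive f x (df x)) ->
  filterlim f (at_left PI) (locally (f PI)) ->
  (forall x, 0 < x <= PI -> Rabs (f x) <= K * pw (Rabs (ln x)) l) ->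
  (forall x, 0 < x < PI -> Rabs (df x) <= K / x * pw (Rabs (ln x)) (l - 1)) ->
  2 * PI * exp (2 * l) + 9 <= INR (Ttil T) -> 0 <= lam <= PI ->
  Rabs (/ INR (Ttil T) * sum_n_m (fun j => f (lamj T j)) 1 (nsum T lam) - / PI * impint f lam)
  <= 7 * (K * Rpower (2 * ln (INR (Ttil T))) l) / INR (Ttil T).
Proof.
  intros hK hl hdf hPI hf hdfb hN hlam. pose proof PI_RGT_0. pose proof (exp_pos (2 * l)).
  set (F := fun x => f (Rmin x PI)).
  assert (F_cont : forall x, 0 < x <= PI -> continuous F x).
  { intros x hx. destruct (Rlt_dec x PI) as [hxPI | hxPI].
    - apply (continuous_ext_loc F f x (Rmin_eq_locally f PI x hxPI)).
      apply (ex_derive_continuous (K := R_AbsRing) (V := R_NormedModule)). exists (df x). apply hdf. lra.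
    - replace x with PI by lra. apply continuous_Rmin_of_left_limit, hPI. }
  assert (F_deriv : forall x, 0 < x < PI -> is_derive F x (df x)).
  { intros x hx. apply (is_derive_ext_loc f F x _ (Rmin_eq_locally f PI x (proj2 hx))). auto. }
  assert (F_bound : forall x, 0 < x <= PI -> Rabs (F x) <= K * pw (Rabs (ln x)) l).
  { intros x hx. unfold F. rewrite Rmin_left by lra. auto. }
  replace (sum_n_m (fun j => f (lamj T j)) 1 (nsum T lam)) with (sum_n_m (fun j => F (lamj T j)) 1 (nsum T lam)).
  2: { apply sum_n_m_ext_loc. intros j hj. unfold F. rewrite Rmin_left; [reflexivity|].
       pose proof (nsum_step_bounds T lam ltac:(nra) hlam).
       pose proof (le_INR j (nsum T lam) (proj2 hj)).
       assert (0 < 2 * PI / INR T) by (apply Rdiv_lt_0_compat; pose proof (Ttil_bounds T); nra).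
       unfold lamj. replace (2 * PI * INR j / INR T) with (INR j * (2 * PI / INR T)) by (unfold Rdiv; ring).
       nra. }
  destruct (Rle_lt_or_eq_dec 0 lam (proj1 hlam)) as [hlam0 | <-].
  - rewrite (impint_ext F f lam hlam0).
    + apply (fourier_sum_impint_error K l F df); assumption.
    + intros t ht. unfold F. rewrite Rmin_left by lra. reflexivity.
    + apply (impint_spec K l F); auto; lra.
  - replace (impint f 0) with (impint F 0) by (unfold impint; destruct (Req_EM_T 0 0); [reflexivity | lra]).
    apply (fourier_sum_impint_error K l F df); auto; lra.
Qed.

Theorem lemma1 (p : nat) (zeta dzeta : nat -> R -> R) (K l : R) :
  1 <= l ->
  (forall k x, (k < p)%nat -> 0 < x < PI ->
     is_derive (zeta k) x (dzeta k x) /\ continuous (dzeta k) x) ->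
  (forall k, (k < p)%nat -> filterlim (zeta k) (at_left PI) (locally (zeta k PI))) ->
  (forall x, 0 < x <= PI ->
     vnorm p (fun k => zeta k x) <= K * pw (Rabs (ln x)) l) ->
  (forall x, 0 < x < PI ->
     vnorm p (fun k => dzeta k x) <= K / x * pw (Rabs (ln x)) (l - 1)) ->
  exists K' : R, exists T0 : nat, forall T : nat, (T0 <= T)%nat ->
    forall lam : R, 0 <= lam <= PI ->
      vnorm p (fun k =>
          / INR (Ttil T) * sum_n_m (fun j => zeta k (lamj T j)) 1 (nsum T lam)
          - / PI * impint (zeta k) lam)
      <= K' * pw (ln (INR (Ttil T))) l / INR (Ttil T).
Proof.
  intros hl hderiv hPI hbound hdbound. pose proof PI_RGT_0. pose proof PI2_1. pose proof (exp_pos (2 * l)).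
  assert (hK : 0 <= K).
  { apply (nonneg_of_vnorm_le_mul_pw p (fun k => zeta k (1 / 2)) K (Rabs (ln (1 / 2))) l); [|apply hbound; lra].
    apply Rabs_pos_lt. pose proof (ln_lt_0 (1 / 2) ltac:(lra)). lra. }
  destruct (INR_unbounded (2 * PI * exp (2 * l) + 9)) as [N0 hN0].
  exists (INR p * (7 * K * Rpower 2 l)), (2 * N0)%nat. intros T hT lam hlam.
  assert (hN : 2 * PI * exp (2 * l) + 9 <= INR (Ttil T)).
  { assert (hN0T : (N0 <= Ttil T)%nat)
      by (unfold Ttil; rewrite <- (Nat.div_mul N0 2) by lia; apply Nat.Div0.div_le_mono; lia).
    apply le_INR in hN0T. lra. }
  assert (hlnN : 0 < ln (INR (Ttil T))) by (rewrite <- ln_1; apply ln_increasing; nra).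
  replace (INR p * (7 * K * Rpower 2 l) * pw (ln (INR (Ttil T))) l / INR (Ttil T))
    with (INR p * (7 * (K * Rpower (2 * ln (INR (Ttil T))) l) / INR (Ttil T)))
    by (rewrite pw_eq_Rpower, <- Rpower_mult_distr by lra; field; nra).
  apply vnorm_le.
  { pose proof (Rpower_gt_0 (2 * ln (INR (Ttil T))) l).
    apply Rmult_le_pos; [| left; apply Rinv_0_lt_compat; nra].
    apply Rmult_le_pos; [lra|]. apply Rmult_le_pos; lra. }
  intros k hk. apply (fourier_sum_impint_error_left_continuous (zeta k) (dzeta k)); auto.
  - intros x hx. apply hderiv; assumption.
  - intros x hx. eapply Rle_trans; [apply (vnorm_ge_coord p (fun k => zeta k x) k hk) | auto].
  - intros x hx. eapply Rle_trans; [apply (vnorm_ge_coord p (fun k => dzeta k x) k hk) | auto].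
Qed.
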